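(* Let $Q=\{q_1,\ldots,q_n\}\subset\mathbb{P}^1$ be distinct points and $\vec g=(g_1,\ldots,g_n)$ effective divisors on $[0,1)$ of common degree $r$, $g_i=\sum_\alpha m_i(\alpha)[\alpha]$, with $\sum_{i,\alpha}m_i(\alpha)\alpha\in\mathbb{Z}$. Suppose the defect is strictly positive: $\delta(\vec g)=r(n-2)-\sum_i T(g_i)>0$. Fix, for each $i$, any good arrangement $a_{i,1},\ldots,a_{i,r}$ of $g_i$. Then it is possible to choose integers $k_1,\ldots,k_r$ satisfying $k_{j+1}\geq \tau_j+k_j+2-n$ for all $j=1,\ldots,r$ (indices modulo $r$, so $k_{r+1}=k_1$) such that $\deg^{\rm par}(E)=0$, where $E=\bigoplus_{j=1}^r E^j$ and $E^j=[k_j;a_{1,j},\ldots,a_{n,j}]$.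
   Context: A parabolic line bundle on $(\mathbb{P}^1,Q)$ is written $[k;a_1,\ldots,a_n]$ with $k\in\mathbb{Z}$, $a_i\in[0,1)$, meaning $\mathcal{O}(k)(a_1q_1+\cdots+a_nq_n)$ (underlying bundle $\mathcal{O}(k)$, weight $a_i$ at $q_i$); its parabolic degree is $k+\sum_i a_i$, and the parabolic degree of a direct sum is the sum. An arrangement of $g_i$ is a sequence $a_{i,1},\ldots,a_{i,r}\in[0,1)$ in which each $\alpha$ occurs exactly $m_i(\alpha)$ times. Indices are taken modulo $r$ ($a_{i,r+1}=a_{i,1}$). An arrangement is good if $\#\{t\in\{1,\ldots,r\}: a_{i,t}\geq a_{i,t+1}\}$ is minimal among all arrangements of $g_i$; this minimum is denoted $T(g_i)$. For the chosen arrangements, $\tau_j=\#\{i: a_{i,j}\geq a_{i,j+1}\}$. *)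

From HB Require Import structures.
From mathcomp Require Import all_boot all_order all_algebra.
Set Implicit Arguments. Unset Strict Implicit. Unset Printing Implicit Defensive.
Import Order.TTheory GRing.Theory Num.Theory.
Local Open Scope ring_scope.

(* A parabolic line bundle [k; a_1, ..., a_n] on (P^1, Q), |Q| = n:
   underlying bundle O(k), weight a_i at q_i. *)
Record parLB (R : Type) (n : nat) := ParLB { plb_deg : int; plb_wt : 'I_n -> R }.

Definition pardeg (R : numDomainType) n (L : parLB R n) : R :=
  (plb_deg L)%:~R + \sum_(i < n) plb_wt L i.

(* parabolic degree of a direct sum (given as the list of its summands) *)
Definition pardeg_sum (R : numDomainType) n (E : seq (parLB R n)) : R :=
  \sum_(L <- E) pardeg L.

(* An effective divisor g = sum_alpha m(alpha)[alpha] of degree r on [0,1)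
   is represented by a list of length r listing each alpha m(alpha) times
   (order irrelevant). *)
Definition divisor_on01 (R : numDomainType) (g : seq R) :=
  all (fun x => (0 <= x) && (x < 1)) g.

Definition arrangement (R : numDomainType) (s g : seq R) := perm_eq s g.

Definition cdesc (R : numDomainType) (s : seq R) : nat :=
  count (fun t => nth (0:R) s (t.+1 %% size s)%N <= nth (0:R) s t) (iota 0 (size s)).

Definition Tmin (R : numDomainType) (g : seq R) : nat :=
  \big[minn/size g]_(s <- permutations g) cdesc s.

Definition good_arrangement (R : numDomainType) (s g : seq R) :=
  arrangement s g /\ forall s', arrangement s' g -> (cdesc s <= cdesc s')%N.

(* tau_j = #{i : a_{i,j} >= a_{i,j+1}}  (0-based j, indices modulo r) *)
Definition is_desc (R : numDomainType) (s : seq R) (r j : nat) : bool :=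
  nth 0 s (j.+1 %% r)%N <= nth 0 s j.
Definition tau (R : numDomainType) n (r : nat) (a : 'I_n -> seq R) (j : nat) : nat :=
  (\sum_(i < n) (is_desc (a i) r j : nat))%N.

Definition Ej (R : numDomainType) n (a : 'I_n -> seq R) (k : nat -> int) (j : nat)
  : parLB R n := ParLB (k j) (fun i => nth (0:R) (a i) j).

From HB Require Import structures.
From mathcomp Require Import all_boot all_order all_algebra.
From mathcomp Require Import intdiv zify.
Set Implicit Arguments. Unset Strict Implicit. Unset Printing Implicit Defensive.
Import Order.TTheory GRing.Theory Num.Theory.
Local Open Scope ring_scope.

(* Summing the constraints [k (j+1) - k j >= c j], [c j = tau j + 2 - n], around
   the cycle shows they force [\sum_j c j <= 0].  A good arrangement realises
   [T(g_i)], so [\sum_j tau j = \sum_i T(g_i)] and [\sum_j c j = - delta < 0].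
   This strict slack at the wrap-around step lets us take [k j = q + P j] or
   [q + P j + 1], with [P] the prefix sums of [c] and the [+1] on the last [s]
   indices; Euclidean division by [r] then picks [q] and [s] so that the total
   degree [\sum_j k j] cancels the (integral) total weight. *)

Lemma sum_ord_indicator_ge (m r : nat) : (\sum_(j < r) (m <= j)%N = r - m)%N.
Proof.
elim: r => [|r IHr]; first by rewrite big_ord0.
by rewrite big_ord_recr /= IHr; case: leqP => ?; lia.
Qed.

Lemma cyclic_chain_with_sum (r : nat) (c : nat -> int) (N : int) :
  (0 < r)%N -> \sum_(j < r) c j < 0 ->
  exists k : nat -> int,
    (forall j, (j < r)%N -> k j + c j <= k (j.+1 %% r)%N) /\
    \sum_(j < r) k j = N.
Proof.
move=> r_gt0 sum_c_lt0.
pose P (j : nat) : int := \sum_(l < j) c l.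
pose S := \sum_(j < r) P j.
pose q := ((N - S) %/ r)%Z.
pose s := ((N - S) %% r)%Z.
have s_ge0 : 0 <= s by rewrite modz_ge0 //; lia.
have s_lt_r : s < r%:Z by rewrite ltz_pmod //; lia.
have [m def_m] : exists m : nat, r%:Z - s = m%:Z by exists `|r%:Z - s|%N; lia.
exists (fun j => q + P j + (m <= j)%N%:Z); split=> [j lt_j_r|].
  have P_succ : P j.+1 = P j + c j by rewrite /P big_ord_recr.
  have [lt_Sj_r | le_r_Sj] := ltnP j.+1 r.
    rewrite modn_small // P_succ.
    have : (((m <= j)%N : nat) <= (m <= j.+1)%N)%N.
      by case: (leqP m j) => // /leqW ->.
    lia.
  have def_r : j.+1 = r by lia.
  have : P j.+1 < 0 by rewrite def_r.
  have m_gt0 : (0 < m)%N by lia.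
  rewrite P_succ def_r modnn /P big_ord0 -/(P j).
  have -> : (m <= 0)%N = false by rewrite leqNgt m_gt0.
  case: (m <= j)%N => /=; lia.
rewrite !big_split /= sumr_const card_ord -(big_morph Posz PoszD erefl).
rewrite sum_ord_indicator_ge -mulr_natr natz.
have := divz_eq (N - S) r%:Z; rewrite -/q -/s -/S.
clearbody q s S; nia.
Qed.

Lemma cdesc_le_size (R : numDomainType) (s : seq R) : (cdesc s <= size s)%N.
Proof. by rewrite /cdesc; apply: leq_trans (count_size _ _) _; rewrite size_iota. Qed.

Lemma Tmin_good_arrangement (R : numDomainType) (s g : seq R) :
  good_arrangement s g -> Tmin g = cdesc s.
Proof.
move=> [perm_sg min_s]; apply/eqP; rewrite eqn_leq; apply/andP; split.
  have : s \in permutations g by rewrite mem_permutations.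
  rewrite /Tmin; elim: (permutations g) => //= t l IHl.
  rewrite big_cons in_cons => /orP[/eqP <- | /IHl]; first exact: geq_minl.
  exact: leq_trans (geq_minr _ _).
rewrite /Tmin big_seq; apply: (big_ind (fun y => cdesc s <= y)%N).
- by rewrite -(perm_size perm_sg) cdesc_le_size.
- by move=> u v; rewrite leq_min => -> ->.
- by move=> t; rewrite mem_permutations; apply: min_s.
Qed.

Lemma big_iota0_ord (T : Type) (idx : T) (op : Monoid.law idx) (r : nat) (F : nat -> T) :
  \big[op/idx]_(j <- iota 0 r) F j = \big[op/idx]_(j < r) F j.
Proof. by rewrite -(subn0 r) -/(index_iota 0 r) big_mkord subn0. Qed.

Lemma sum_tau (R : numDomainType) n r (a : 'I_n -> seq R) :
  (forall i, size (a i) = r) ->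
  (\sum_(j < r) tau r a j = \sum_(i < n) cdesc (a i))%N.
Proof.
move=> size_a; rewrite /tau exchange_big /=; apply: eq_bigr => i _.
rewrite /cdesc size_a -sum1_count [RHS]big_mkcond /= big_iota0_ord.
by apply: eq_bigr => j _; rewrite /is_desc; case: ifP.
Qed.

Lemma pardeg_sum_Ej (R : numDomainType) n r (a : 'I_n -> seq R) (k : nat -> int) :
  (forall i, size (a i) = r) ->
  pardeg_sum [seq Ej a k j | j <- iota 0 r] =
    (\sum_(j < r) k j)%:~R + \sum_(i < n) \sum_(x <- a i) x.
Proof.
move=> size_a; rewrite /pardeg_sum big_map /pardeg /= big_split /= big_iota0_ord.
rewrite -(rmorph_sum intr) exchange_big /=; congr (_ + _); apply: eq_bigr => i _.
by rewrite [RHS](big_nth 0) size_a /index_iota subn0.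
Qed.

Theorem theorem6p8 (R : realFieldType) (n r : nat) (g : 'I_n -> seq R) :
  (forall i, size (g i) = r) ->
  (forall i, divisor_on01 (g i)) ->
  (exists z : int, \sum_(i < n) \sum_(x <- g i) x = z%:~R) ->
  (0 < (r%:Z * (n%:Z - 2) - \sum_(i < n) (Tmin (g i))%:Z)%R) ->
  forall a : 'I_n -> seq R, (forall i, good_arrangement (a i) (g i)) ->
  exists k : nat -> int,
    (forall j, (j < r)%N ->
       k (j.+1 %% r)%N >= (tau r a j)%:Z + k j + 2 - n%:Z) /\
    pardeg_sum [seq Ej a k j | j <- iota 0 r] = 0.
Proof.
move=> size_g _ [z sum_g] defect_gt0 a good_a.
have size_a i : size (a i) = r by rewrite (perm_size (good_a i).1).
have sum_a : \sum_(i < n) \sum_(x <- a i) x = z%:~R.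
  by rewrite -sum_g; apply: eq_bigr => i _; apply: perm_big (good_a i).1.
have sum_Tmin_lt : (\sum_(i < n) Tmin (g i))%N%:Z < r%:Z * (n%:Z - 2).
  by rewrite -subr_gt0 (big_morph Posz PoszD erefl).
have r_gt0 : (0 < r)%N by case: (posnP r) sum_Tmin_lt => [->|//]; lia.
pose c j : int := (tau r a j)%:Z + 2 - n%:Z.
have sum_c_lt0 : \sum_(j < r) c j < 0.
  rewrite !big_split /= !sumr_const card_ord -(big_morph Posz PoszD erefl).
  have sum_cdesc : (\sum_(i < n) cdesc (a i) = \sum_(i < n) Tmin (g i))%N.
    by apply: eq_bigr => i _; rewrite (Tmin_good_arrangement (good_a i)).
  rewrite sum_tau // sum_cdesc -[- _ *+ r]mulr_natr !natz.
  lia.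
have [k [k_step sum_k]] := cyclic_chain_with_sum (- z) r_gt0 sum_c_lt0.
exists k; split=> [j /k_step | ]; first by rewrite /c; lia.
by rewrite pardeg_sum_Ej // sum_k sum_a mulrNz addNr.
Qed.
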